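(* Let $q$ be a prime power, $m\ge1$, let $g_1,\dots,g_n\in\mathbb{F}_{q^m}$ be linearly independent over $\mathbb{F}_q$ and $r_1,\dots,r_n\in\mathbb{F}_{q^m}$. Define $\Pi_1(x):=x^q-g_1^{q-1}x$, $\Lambda_1(x):=\frac{r_1}{g_1}x$, and for $i=1,\dots,n-1$ $$\Pi_{i+1}(x):=\big(x^q-\Pi_i(g_{i+1})^{q-1}x\big)\circ\Pi_i(x),\qquad \Lambda_{i+1}(x):=\Lambda_i(x)-\frac{\Lambda_i(g_{i+1})-r_{i+1}}{\Pi_i(g_{i+1})}\Pi_i(x).$$ Then $\Pi_i(x)=\Pi_{\langle g_1,\dots,g_i\rangle}(x)$ and $\Lambda_i(x)=\Lambda_{(g_1,\dots,g_i),(r_1,\dots,r_i)}(x)$ for $i=1,\dots,n$.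
   Context: Write $[i]:=q^i$. $\langle\cdot\rangle$ denotes $\mathbb{F}_q$-linear span. For an $\mathbb{F}_q$-subspace $U\subseteq\mathbb{F}_{q^m}$, $\Pi_U(x)=\prod_{u\in U}(x-u)$ is the $q$-annihilator polynomial. For $\mathbb{F}_q$-linearly independent $h_1,\dots,h_s\in\mathbb{F}_{q^m}$ and $\mathbf h=(h_1,\dots,h_s)$, $\boldsymbol\rho=(\rho_1,\dots,\rho_s)\in\mathbb{F}_{q^m}^s$, the $q$-Lagrange polynomial is $\Lambda_{\mathbf h,\boldsymbol\rho}(x)=\sum_{i=1}^s(-1)^{s-i}\rho_i\det(\mathfrak D_i(\mathbf h,x))/\det(M_s(h_1,\dots,h_s))$, where $M_s(v_1,\dots,v_t)$ is the $s\times t$ matrix with $(j,l)$ entry $v_l^{[j-1]}$ and $\mathfrak D_i(\mathbf h,x)$ is $M_s(h_1,\dots,h_s,x)$ with its $i$-th column removed. *)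

From HB Require Import structures.
From mathcomp Require Import all_boot all_order all_algebra all_field.
Set Implicit Arguments. Unset Strict Implicit. Unset Printing Implicit Defensive.
Import GRing.Theory.
Local Open Scope ring_scope.

Section Defs.
Variables (L : finFieldType) (q : nat).

(* F_q is realised inside L (|L| = q^m) as the set of x with x^q = x. *)
Definition Fq_lin_indep (s : nat) (h : 'I_s -> L) : Prop :=
  forall c : 'I_s -> L, (forall j, c j ^+ q = c j) ->
    \sum_(j < s) c j * h j = 0 -> forall j, c j = 0.

Definition Fq_span (s : nat) (h : 'I_s -> L) : {set L} :=
  [set x | [exists c : {ffun 'I_s -> L},
     [forall j, c j ^+ q == c j] && (x == \sum_(j < s) c j * h j)]].

Definition annihilator (U : {set L}) : {poly L} :=
  \prod_(u in U) ('X - u%:P).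

Definition Mq (s : nat) (h : 'I_s -> L) : 'M[L]_s :=
  \matrix_(j < s, l < s) h l ^+ (q ^ j).

Definition Mqx (s : nat) (h : 'I_s -> L) : 'M[{poly L}]_(s, s.+1) :=
  \matrix_(j < s, l < s.+1)
     (if unlift ord_max l is Some l' then (h l' ^+ (q ^ j))%:P
      else 'X ^+ (q ^ j)).

Definition Dq (s : nat) (h : 'I_s -> L) (i : 'I_s) : 'M[{poly L}]_s :=
  col' (widen_ord (leqnSn s) i) (Mqx h).

(* q-Lagrange polynomial; i is 0-based, so (-1)^{s-i} becomes (-1)^{s-(i+1)} *)
Definition qLagrange (s : nat) (h rho : 'I_s -> L) : {poly L} :=
  \sum_(i < s) ((-1) ^+ (s - i.+1) * rho i / \det (Mq h))%:P * \det (Dq h i).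

(* Recursive polynomials; g, r : nat -> L are used with 1-based indices g 1, ..., g n.
   PiS k = Pi_{k+1}, LamS k = Lambda_{k+1}. *)
Fixpoint PiS (g : nat -> L) (k : nat) : {poly L} :=
  match k with
  | 0 => 'X ^+ q - (g 1 ^+ (q - 1))%:P * 'X
  | k'.+1 => ('X ^+ q - (((PiS g k').[g k.+1]) ^+ (q - 1))%:P * 'X) \Po PiS g k'
  end.

Fixpoint LamS (g r : nat -> L) (k : nat) : {poly L} :=
  match k with
  | 0 => (r 1 / g 1)%:P * 'X
  | k'.+1 => LamS g r k' -
      (((LamS g r k').[g k.+1] - r k.+1) / (PiS g k').[g k.+1])%:P * PiS g k'
  end.

Definition PiRec (g : nat -> L) (i : nat) := PiS g i.-1.
Definition LamRec (g r : nat -> L) (i : nat) := LamS g r i.-1.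

End Defs.

(* All polynomials involved are linearized: \sum_r a_r X^(q^r).  Their evaluation
   maps are F_q-linear, so one of them that vanishes on F_q-independent
   g_1, ..., g_s vanishes on the whole span, a set of q^s elements; if its degree
   is at most q^(s-1) it is therefore zero.  Consequently Pi_i is the annihilator
   of <g_1, ..., g_i> as soon as it is monic of degree q^i and kills the g_j, and
   Lambda_i is the q-Lagrange polynomial as soon as its degree is at most q^(i-1)
   and it interpolates the r_j: by Cramer's rule the q-Lagrange polynomial is the
   linearized polynomial whose coefficient vector solves the Moore system
   a M_i = rho, and it interpolates as well.  Both properties follow by induction
   along the recursion; the division by Pi_i(g_(i+1)) is legitimate since
   g_(i+1) lies outside the span, i.e. is not a root of its annihilator. *)

From HB Require Import structures.
From mathcomp Require Import all_boot all_order all_algebra all_field.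
From mathcomp Require Import ring zify.
Set Implicit Arguments. Unset Strict Implicit. Unset Printing Implicit Defensive.
Import GRing.Theory.
Local Open Scope ring_scope.

Section QPolynomials.
Variables (L : finFieldType) (q : nat).
Hypothesis q_gt1 : (1 < q)%N.
Hypothesis exprqD : forall x y : L, (x + y) ^+ q = x ^+ q + y ^+ q.

Lemma q_gt0 : (0 < q)%N. Proof. exact: ltnW. Qed.

Lemma expr0q : (0 : L) ^+ q = 0.
Proof. by rewrite expr0n eqn0Ngt q_gt0. Qed.

Lemma exprqB (x y : L) : (x - y) ^+ q = x ^+ q - y ^+ q.
Proof. by rewrite -[in RHS](subrK y x) (exprqD (x - y) y) addrK. Qed.

Lemma exprqN1 : (-1 : L) ^+ q = -1.
Proof. by rewrite -sub0r exprqB expr0q expr1n. Qed.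

Lemma exprqnD n (x y : L) : (x + y) ^+ (q ^ n) = x ^+ (q ^ n) + y ^+ (q ^ n).
Proof. by elim: n => [|n IH]; rewrite ?expr1 // expnSr !exprM IH exprqD. Qed.

Lemma exprqn_fixed n (c : L) : c ^+ q = c -> c ^+ (q ^ n) = c.
Proof. by move=> hc; elim: n => [|n IH]; rewrite ?expr1 // expnSr exprM IH. Qed.

Definition qlinear (f : L -> L) :=
  {morph f : x y / x + y} /\ forall c x, c ^+ q = c -> f (c * x) = c * f x.

Definition qpoly (P : {poly L}) := qlinear (horner P).

Lemma qlinear0 f : qlinear f -> f 0 = 0.
Proof. by case=> fD _; apply: (addrI (f 0)); rewrite -fD !addr0. Qed.

Lemma qlinear_sum f (I : finType) (c x : I -> L) : qlinear f ->
  (forall i, c i ^+ q = c i) -> f (\sum_i c i * x i) = \sum_i c i * f (x i).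
Proof.
move=> [fD fZ] hc; rewrite (big_morph f fD (qlinear0 (conj fD fZ))).
by apply: eq_bigr => i _; rewrite fZ.
Qed.

Lemma qpolyX : qpoly 'X.
Proof. by split=> [x y|c x _]; rewrite !hornerX. Qed.

Lemma qpolyXqn n : qpoly 'X^(q ^ n).
Proof.
split=> [x y|c x hc]; rewrite !hornerXn ?exprqnD //.
by rewrite exprMn exprqn_fixed.
Qed.

Lemma qpoly0 : qpoly 0.
Proof. by split=> [x y|c x _]; rewrite !horner0 ?addr0 ?mulr0. Qed.

Lemma qpolyD P Q : qpoly P -> qpoly Q -> qpoly (P + Q).
Proof.
move=> [PD PZ] [QD QZ]; split=> [x y|c x hc]; rewrite !hornerD.
  by rewrite PD QD addrACA.
by rewrite PZ ?QZ ?mulrDr.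
Qed.

Lemma qpolyB P Q : qpoly P -> qpoly Q -> qpoly (P - Q).
Proof.
move=> [PD PZ] [QD QZ]; split=> [x y|c x hc]; rewrite !hornerD !hornerN.
  by rewrite PD QD opprD addrACA.
by rewrite PZ ?QZ ?mulrBr.
Qed.

Lemma qpolyCM a P : qpoly P -> qpoly (a%:P * P).
Proof.
move=> [PD PZ]; split=> [x y|c x hc]; rewrite !hornerCM.
  by rewrite PD mulrDr.
by rewrite PZ // mulrCA.
Qed.

Lemma qpoly_comp P Q : qpoly P -> qpoly Q -> qpoly (P \Po Q).
Proof.
move=> [PD PZ] [QD QZ]; split=> [x y|c x hc]; rewrite !horner_comp.
  by rewrite QD PD.
by rewrite QZ ?PZ.
Qed.

Lemma exprq_predK (x : L) : x ^+ (q - 1) * x = x ^+ q.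
Proof. by rewrite -exprSr subn1 prednK // q_gt0. Qed.

Lemma qpoly_XqBCX (c : L) : qpoly ('X^q - c%:P * 'X).
Proof. by have := qpolyB (qpolyXqn 1) (qpolyCM c qpolyX); rewrite expn1. Qed.

Lemma size_XqBCX (c : L) : size ('X^q - c%:P * 'X) = q.+1.
Proof.
rewrite size_polyDl size_polyXn // size_polyN mul_polyC.
by rewrite (leq_ltn_trans (size_scale_leq _ _)) // size_polyX.
Qed.

Lemma monic_XqBCX (c : L) : 'X^q - c%:P * 'X \is monic.
Proof.
rewrite monicE lead_coefDl ?lead_coefXn // size_polyXn size_polyN mul_polyC.
by rewrite (leq_ltn_trans (size_scale_leq _ _)) // size_polyX.
Qed.

Lemma qlinear_span_root s (h : 'I_s -> L) f x : qlinear f ->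
  (forall j, f (h j) = 0) -> x \in Fq_span q h -> f x = 0.
Proof.
move=> hf h0; rewrite inE => /existsP[c /andP[/forallP hc /eqP ->]].
rewrite qlinear_sum //; last by move=> i; apply/eqP.
by apply: big1 => i _; rewrite h0 mulr0.
Qed.

Lemma Fq_lin_indep_widen s t (le_st : (s <= t)%N) (h : 'I_t -> L) :
  Fq_lin_indep q h -> Fq_lin_indep q (fun j : 'I_s => h (widen_ord le_st j)).
Proof.
move=> hind c hc hs j.
pose c' (i : 'I_t) := if insub (val i) is Some i' then c i' else 0.
have hc' i : c' i ^+ q = c' i by rewrite /c'; case: insub => [i'|]; rewrite ?expr0q.
have /hind/(_ (widen_ord le_st j)) : \sum_(i < t) c' i * h i = 0.
  rewrite (bigID (fun i : 'I_t => (i < s)%N)) /= [X in _ + X]big1 ?addr0.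
    by rewrite big_ord_narrow -[RHS]hs; apply: eq_bigr => i _; rewrite /c' /= valK.
  by move=> i ge_is; rewrite /c' insubF ?mul0r // (negbTE ge_is).
by rewrite /c' /= valK; apply.
Qed.

Lemma Fq_lin_indep_notin_span s (h : 'I_s.+1 -> L) : Fq_lin_indep q h ->
  h ord_max \notin Fq_span q (fun j : 'I_s => h (widen_ord (leqnSn s) j)).
Proof.
move=> hind; apply/negP; rewrite inE => /existsP [c /andP[/forallP hc /eqP hsum]].
pose c' (j : 'I_s.+1) := if unlift ord_max j is Some j' then c j' else -1.
have: c' ord_max = 0.
  apply: hind => [j|].
    by rewrite /c'; case: unlift => [j'|]; [exact/eqP | exact: exprqN1].
  rewrite big_ord_recr /= /c' unlift_none mulN1r hsum.
  apply/eqP; rewrite subr_eq0; apply/eqP; apply: eq_bigr => j _.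
  have -> : widen_ord (leqnSn s) j = lift ord_max j.
    by apply: val_inj; rewrite /= /bump leqNgt ltn_ord.
  by rewrite liftK.
by rewrite /c' unlift_none => /eqP; rewrite oppr_eq0 oner_eq0.
Qed.

Hypothesis card_fixed : #|[set x : L | x ^+ q == x]| = q.

Lemma card_Fq_span s (h : 'I_s -> L) :
  Fq_lin_indep q h -> #|Fq_span q h| = (q ^ s)%N.
Proof.
move=> hind.
pose A := [set c : {ffun 'I_s -> L} | [forall j, c j ^+ q == c j]].
pose F (c : {ffun 'I_s -> L}) := \sum_(j < s) c j * h j.
have -> : Fq_span q h = F @: A.
  apply/setP => x; rewrite inE; apply/existsP/imsetP.
    by case=> c /andP[hc /eqP ->]; exists c; rewrite ?inE.
  by case=> c; rewrite inE => hc ->; exists c; rewrite hc eqxx.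
rewrite card_in_imset.
  have -> : #|A| = #|@ffun_on_mem 'I_s _ (mem [set x : L | x ^+ q == x])|.
    by apply: eq_card => c; rewrite inE; apply/forallP/ffun_onP => H j;
      move: (H j); rewrite inE.
  by rewrite card_ffun_on card_fixed card_ord.
move=> c c'; rewrite !inE => /forallP hc /forallP hc' eqF.
apply/ffunP => j; apply/eqP; rewrite -subr_eq0; apply/eqP.
apply: (hind (fun j => c j - c' j)) => [i|].
  by rewrite exprqB (eqP (hc i)) (eqP (hc' i)).
under eq_bigr do rewrite mulrBl.
by rewrite sumrB; apply/eqP; rewrite subr_eq0; apply/eqP.
Qed.

Lemma qpoly_eq0 s (h : 'I_s.+1 -> L) (P : {poly L}) : Fq_lin_indep q h ->
  qpoly P -> (size P <= (q ^ s).+1)%N -> (forall j, P.[h j] = 0) -> P = 0.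
Proof.
move=> hind qP szP h0; apply/eqP; apply: contraT => nzP.
have := max_poly_roots nzP (rs := enum (Fq_span q h)).
rewrite enum_uniq -cardE card_Fq_span //.
have -> : all (root P) (enum (Fq_span q h)).
  apply/allP => x; rewrite mem_enum => x_span.
  by apply/rootP; apply: (qlinear_span_root qP).
move=> /(_ isT isT) /leq_trans /(_ szP).
by rewrite ltnS leqNgt ltn_exp2l // ltnSn.
Qed.

Lemma qpoly_annihilator s (h : 'I_s -> L) (P : {poly L}) : Fq_lin_indep q h ->
  P \is monic -> size P = (q ^ s).+1 -> qpoly P ->
  (forall j, P.[h j] = 0) -> P = annihilator (Fq_span q h).
Proof.
move=> hind monP szP qP h0; rewrite /annihilator -big_enum.
have [Q PE] : exists Q, P = Q * \prod_(z <- enum (Fq_span q h)) ('X - z%:P).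
  apply: uniq_roots_prod_XsubC; last by rewrite uniq_rootsE enum_uniq.
  apply/allP => x; rewrite mem_enum => x_span.
  by apply/rootP; apply: (qlinear_span_root qP).
apply/eqP; rewrite -eqp_monic ?monic_prod_XsubC // eqp_sym.
rewrite -dvdp_size_eqp; last by rewrite PE dvdp_mull.
by rewrite size_prod_XsubC -cardE card_Fq_span // szP.
Qed.

Definition linearized (s : nat) (a : nat -> L) : {poly L} :=
  \sum_(r < s) (a r)%:P * 'X^(q ^ r).

Lemma horner_linearized s a x :
  (linearized s a).[x] = \sum_(r < s) a r * x ^+ (q ^ r).
Proof. by rewrite horner_sum; apply: eq_bigr => r _; rewrite hornerCM hornerXn. Qed.

Lemma qpoly_linearized s a : qpoly (linearized s a).
Proof.
apply: (big_ind qpoly qpoly0 qpolyD) => r _.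
exact/qpolyCM/qpolyXqn.
Qed.

Lemma size_linearized s a : (size (linearized s.+1 a) <= (q ^ s).+1)%N.
Proof.
apply: (big_ind (fun P : {poly L} => (size P <= (q ^ s).+1)%N)) => [|P Q|r _].
- by rewrite size_poly0.
- by move=> szP szQ; rewrite (leq_trans (size_polyD _ _)) // geq_max szP.
rewrite mul_polyC (leq_trans (size_scale_leq _ _)) // size_polyXn ltnS.
by rewrite leq_exp2l // -ltnS.
Qed.

Lemma horner_linearized_Mq s (a : 'rV[L]_s.+1) (h : 'I_s.+1 -> L) k :
  (linearized s.+1 (fun r => a 0 (inord r))).[h k] = (a *m Mq q h) 0 k.
Proof.
rewrite horner_linearized mxE; apply: eq_bigr => r _.
by rewrite inord_val [Mq _ _ _ _]mxE.
Qed.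

Lemma det_Mq_neq0 s (h : 'I_s -> L) : Fq_lin_indep q h -> \det (Mq q h) != 0.
Proof.
case: s h => [|s] h hind; first by rewrite det_mx00 oner_eq0.
apply/det0P => -[v nz_v vM].
pose P := linearized s.+1 (fun r => v 0 (inord r)).
have P0 : P = 0.
  apply: (qpoly_eq0 hind (qpoly_linearized _ _) (size_linearized _ _)) => l.
  by rewrite horner_linearized_Mq vM mxE.
case/eqP: nz_v; apply/matrixP => i j; rewrite ord1 mxE.
have := congr1 (fun p : {poly L} => p`_(q ^ j)) P0.
rewrite coef0 /P /linearized coef_sum (bigD1 j) //= big1 ?addr0.
  by rewrite coefCM coefXn eqxx mulr1 inord_val.
move=> r ne_rj; rewrite coefCM coefXn eqn_exp2l // eq_sym.
by have /negbTE -> : (r : nat) != j := ne_rj; rewrite mulr0.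
Qed.

Lemma det_Dq s (h : 'I_s.+1 -> L) (i : 'I_s.+1) :
  \det (Dq q h i) =
  \sum_(r < s.+1) ((-1) ^+ (s - i) * cofactor (Mq q h) r i)%:P * 'X^(q ^ r).
Proof.
rewrite (expand_det_col _ ord_max); apply: eq_bigr => r _.
have wi_max : lift (widen_ord (leqnSn s.+1) i) ord_max = ord_max.
  by apply: val_inj; rewrite /= /bump; have := ltn_ord i; lia.
have minorE : col' ord_max (Dq q h i) = map_mx polyC (col' i (Mq q h)).
  apply/matrixP => a b; rewrite !mxE.
  have -> : lift (widen_ord (leqnSn s.+1) i) (lift ord_max b) = lift ord_max (lift i b).
    by apply: val_inj; rewrite /= /bump; have := ltn_ord i; have := ltn_ord b; lia.
  by rewrite liftK.
rewrite {1}/Dq !mxE wi_max unlift_none /cofactor minorE -map_row' det_map_mx.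
rewrite mulrC; congr (_ * _).
rewrite !rmorphM /= mulrA -rmorphM /= -exprD.
have -> : (s - i + (r + i) = r + s)%N by have := ltn_ord i; lia.
by rewrite rmorphXn rmorphN rmorph1.
Qed.

(* [rho *m invmx (Mq q h)], written with the adjugate so that no invertibility
   hypothesis is needed to identify it with the coefficients of [qLagrange]. *)
Definition moore_solution s (h rho : 'I_s -> L) : 'rV[L]_s :=
  (\det (Mq q h))^-1 *: ((\row_i rho i) *m \adj (Mq q h)).

Lemma qLagrange_linearized s (h rho : 'I_s.+1 -> L) :
  qLagrange q h rho = linearized s.+1 (fun r => moore_solution h rho 0 (inord r)).
Proof.
rewrite /qLagrange /linearized.
under eq_bigr do rewrite det_Dq mulr_sumr.
rewrite exchange_big; apply: eq_bigr => r _.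
under eq_bigr do rewrite mulrA -polyCM.
rewrite -mulr_suml -rmorph_sum; congr (_%:P * _).
rewrite !mxE inord_val mulr_sumr; apply: eq_bigr => i _.
by rewrite !mxE subSS -[RHS](signrMK (s - i)); ring.
Qed.

Lemma qLagrange_interp s (h rho : 'I_s.+1 -> L) k : Fq_lin_indep q h ->
  (qLagrange q h rho).[h k] = rho k.
Proof.
move=> hind; rewrite qLagrange_linearized horner_linearized_Mq /moore_solution.
rewrite -scalemxAl -mulmxA mul_adj_mx mul_mx_scalar scalerA.
by rewrite mulVf ?det_Mq_neq0 // scale1r mxE.
Qed.

Section Recursion.
Variables (g r : nat -> L) (n : nat).
Hypothesis g_indep : Fq_lin_indep q (fun j : 'I_n => g j.+1).

Lemma g_prefix_indep i : (i <= n)%N -> Fq_lin_indep q (fun j : 'I_i => g j.+1).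
Proof. by move=> le_in; exact (Fq_lin_indep_widen (le_st := le_in) g_indep). Qed.

Lemma horner_PiS0 x : (PiS q g 0).[x] = x ^+ q - g 1 ^+ (q - 1) * x.
Proof. by rewrite /= !hornerE. Qed.

Lemma horner_PiSS k x : (PiS q g k.+1).[x] =
  (PiS q g k).[x] ^+ q - (PiS q g k).[g k.+2] ^+ (q - 1) * (PiS q g k).[x].
Proof. by rewrite /= horner_comp !hornerE. Qed.

Lemma qpoly_PiS k : qpoly (PiS q g k).
Proof.
by elim: k => [|k IH]; [exact: qpoly_XqBCX | exact: qpoly_comp (qpoly_XqBCX _) IH].
Qed.

Lemma size_PiS k : size (PiS q g k) = (q ^ k.+1).+1.
Proof.
elim: k => [|k IH]; first by rewrite size_XqBCX expn1.
have := size_comp_poly ('X^q - ((PiS q g k).[g k.+2] ^+ (q - 1))%:P * 'X) (PiS q g k).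
rewrite size_XqBCX IH /= -expnS; case: size => [|m] /= szE; last by rewrite szE.
by have := expn_gt0 q k.+2; rewrite q_gt0 -szE.
Qed.

Lemma monic_PiS k : PiS q g k \is monic.
Proof.
elim: k => [|k IH]; first exact: monic_XqBCX.
rewrite /= monicE lead_coef_comp; last by rewrite size_PiS ltnS expn_gt0 q_gt0.
by rewrite (monicP (monic_XqBCX _)) (monicP IH) expr1n mul1r.
Qed.

Lemma PiS_root k j : (0 < j <= k.+1)%N -> (PiS q g k).[g j] = 0.
Proof.
elim: k => [|k IH] /andP[j_gt0 le_jk].
  have -> : j = 1%N by lia.
  by rewrite horner_PiS0 exprq_predK subrr.
rewrite horner_PiSS; have [le_jk1|gt_jk1] := leqP j k.+1.
  by rewrite IH ?j_gt0 // expr0q mulr0 subrr.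
have -> : j = k.+2 by lia.
by rewrite exprq_predK subrr.
Qed.

Lemma PiS_annihilator k : (k < n)%N ->
  PiS q g k = annihilator (Fq_span q (fun j : 'I_k.+1 => g j.+1)).
Proof.
move=> lt_kn; apply: qpoly_annihilator.
- exact: g_prefix_indep.
- exact: monic_PiS.
- exact: size_PiS.
- exact: qpoly_PiS.
by move=> j; apply: PiS_root; rewrite /= ltn_ord.
Qed.

Lemma PiS_next_neq0 k : (k.+1 < n)%N -> (PiS q g k).[g k.+2] != 0.
Proof.
move=> lt_k1n; rewrite -rootE PiS_annihilator ?(ltnW lt_k1n) // /annihilator.
rewrite -big_enum root_prod_XsubC mem_enum.
exact: (Fq_lin_indep_notin_span (g_prefix_indep lt_k1n)).
Qed.

Lemma g1_neq0 : (0 < n)%N -> g 1 != 0.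
Proof.
move=> n_gt0; apply: contraNneq (Fq_lin_indep_notin_span (g_prefix_indep n_gt0)) => ->.
rewrite inE; apply/existsP; exists [ffun => 0].
by rewrite big_ord0 eqxx andbT; apply/forallP => -[].
Qed.

Lemma qpoly_LamS k : qpoly (LamS q g r k).
Proof.
elim: k => [|k IH]; first exact: qpolyCM qpolyX.
exact: qpolyB IH (qpolyCM _ (qpoly_PiS k)).
Qed.

Lemma size_LamS k : (size (LamS q g r k) <= (q ^ k).+1)%N.
Proof.
elim: k => [|k IH].
  by rewrite /= mul_polyC (leq_trans (size_scale_leq _ _)) // size_polyX.
rewrite /= (leq_trans (size_polyD _ _)) // size_polyN geq_max mul_polyC.
rewrite (leq_trans (size_scale_leq _ _)) ?size_PiS // andbT (leq_trans IH) //.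
by rewrite ltnS leq_exp2l.
Qed.

Lemma LamS_interp k j : (k < n)%N -> (j <= k)%N -> (LamS q g r k).[g j.+1] = r j.+1.
Proof.
elim: k j => [|k IH] j lt_kn le_jk.
  have -> : j = 0%N by lia.
  by rewrite /= hornerCM hornerX divfK // g1_neq0.
rewrite /= hornerD hornerN hornerCM.
have [le_jk1|gt_jk1] := leqP j k.
  by rewrite IH ?(@PiS_root k j.+1) ?mulr0 ?subr0 //; lia.
have -> : j = k.+1 by lia.
by rewrite divfK ?PiS_next_neq0 // subKr.
Qed.

Lemma LamS_qLagrange k : (k < n)%N ->
  LamS q g r k = qLagrange q (fun j : 'I_k.+1 => g j.+1) (fun j : 'I_k.+1 => r j.+1).
Proof.
move=> lt_kn; have indep_k := g_prefix_indep lt_kn.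
apply/eqP; rewrite -subr_eq0; apply/eqP; apply: (qpoly_eq0 indep_k).
- by rewrite qLagrange_linearized; exact: qpolyB (qpoly_LamS k) (qpoly_linearized _ _).
- rewrite (leq_trans (size_polyD _ _)) // size_polyN geq_max size_LamS.
  by rewrite qLagrange_linearized size_linearized.
by move=> j; rewrite hornerD hornerN qLagrange_interp // LamS_interp ?subrr // -ltnS.
Qed.

End Recursion.

End QPolynomials.

Lemma dvdp_XqBX (R : idomainType) (q j : nat) :
  ('X^q - 'X : {poly R}) %| 'X^(q ^ j) - 'X.
Proof.
elim: j => [|j IH]; first by rewrite expn0 expr1 subrr dvdp0.
have -> : ('X^(q ^ j.+1) - 'X : {poly R}) =
          (('X^q) ^+ (q ^ j) - 'X ^+ (q ^ j)) + ('X^(q ^ j) - 'X).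
  by rewrite addrA subrK expnS exprM.
by rewrite dvdp_add // subrXX dvdp_mulr.
Qed.

(* The q-th power fixed points are the roots of X^q - X, which divides
   X^|L| - X = \prod_(x : L) (X - x) and therefore splits with distinct roots. *)
Lemma card_exprq_fixed (L : finFieldType) (q m : nat) :
  (1 < q)%N -> #|L| = (q ^ m)%N -> #|[set x : L | x ^+ q == x]| = q.
Proof.
move=> q_gt1 cardL; set P : {poly L} := 'X^q - 'X.
have szP : size P = q.+1.
  by rewrite size_polyDl size_polyXn // size_polyN size_polyX ltnS.
have rootPq x : root P x = (x ^+ q == x) by rewrite rootE !hornerE subr_eq0.
apply/eqP; rewrite eqn_leq; apply/andP; split.
  have nzP : P != 0 by rewrite -size_poly_eq0 szP.
  have := max_poly_roots nzP (rs := enum [set x : L | x ^+ q == x]).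
  rewrite enum_uniq -cardE szP ltnS; apply => //.
  by apply/allP => x; rewrite mem_enum inE rootPq.
have /dvdp_prod_XsubC[msk eqP_msk] : P %| \prod_(x : L) ('X - x%:P).
  by rewrite -finField_genPoly cardL dvdp_XqBX.
have := eqp_size eqP_msk; rewrite szP size_prod_XsubC => -[q_eq].
rewrite {1}q_eq cardE; apply: uniq_leq_size; first exact/mask_uniq/index_enum_uniq.
by move=> x x_msk; rewrite mem_enum inE -rootPq (eqp_root eqP_msk) root_prod_XsubC.
Qed.

Lemma exprD_prime_power (L : finFieldType) (p k m : nat) (x y : L) :
  prime p -> #|L| = ((p ^ k) ^ m)%N -> (x + y) ^+ (p ^ k) = x ^+ (p ^ k) + y ^+ (p ^ k).
Proof.
move=> p_pr cardL; have p_char : p \in [pchar L].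
  by apply: (card_finPcharP (n := (k * m)%N)); rewrite // cardL expnM.
by apply: exprDn_pchar; rewrite (eq_pnat _ (pcharf_eq p_char)) pnatX pnat_id.
Qed.

Unset Implicit Arguments.

Theorem proposition5 (L : finFieldType) (q m n : nat) (g r : nat -> L) :
  (exists p k : nat, [/\ prime p, (0 < k)%N & q = (p ^ k)%N]) ->
  (0 < m)%N ->
  #|L| = (q ^ m)%N ->
  Fq_lin_indep q (fun j : 'I_n => g j.+1) ->
  forall i : nat, (1 <= i <= n)%N ->
    PiRec q g i = annihilator (Fq_span q (fun j : 'I_i => g j.+1)) /\
    LamRec q g r i = qLagrange q (fun j : 'I_i => g j.+1) (fun j : 'I_i => r j.+1).
Proof.
move=> [p [k [p_pr k_gt0 qE]]] _ cardL g_indep [//|i] /= lt_in.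
have q_gt1 : (1 < q)%N.
  by rewrite qE (leq_trans (prime_gt1 p_pr)) // -{1}(expn1 p) leq_exp2l // prime_gt1.
have exprqD (x y : L) : (x + y) ^+ q = x ^+ q + y ^+ q.
  by rewrite qE; apply: exprD_prime_power p_pr _; rewrite -qE cardL.
have card_fixed := card_exprq_fixed q_gt1 cardL.
split; first exact: (PiS_annihilator q_gt1 exprqD card_fixed g_indep lt_in).
exact: (LamS_qLagrange q_gt1 exprqD card_fixed r g_indep lt_in).
Qed.
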